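(* Let $B=B_0+B_1$ be a unital associative superalgebra and let $Z=Z(B)_0$ be the even part of its center. Assume that the nonzero elements of $Z$ are not zero divisors of $B$, and let $A=Z^{-1}B$ be the central closure of $B$, a superalgebra over the field $k=Z^{-1}Z$. If the superalgebra $A$ is simple and finite dimensional over $k$, then $B$ embeds, as a $Z$-module, into a free finitely generated $Z$-module.
   Context: A superalgebra is a $\mathbb{Z}_2$-graded algebra $B=B_0\oplus B_1$, where $B_0$ is the even part and $B_1$ is the odd part. For elements $x,y,z$ write $(x,y,z)=(xy)z-x(yz)$ and $[x,y]=xy-yx$. The center of a (super)algebra $B$ is $Z(B)=\{x\in B\mid (x,a,b)=(a,x,b)=(a,b,x)=[a,x]=0 \text{ for all } a,b\in B\}$, and $Z(B)_0=Z(B)\cap B_0$ is its even part. $Z^{-1}B$ denotes the localization of $B$ at $Z\setminus\{0\}$, which contains $B$ under the stated assumption, and $Z^{-1}Z$ is the field of fractions of $Z$. A superalgebra is simple if it has no graded ideals other than $0$ and itself and its product is nonzero. *)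

From HB Require Import structures.
From mathcomp Require Import all_boot all_order all_algebra.
Set Implicit Arguments. Unset Strict Implicit. Unset Printing Implicit Defensive.
Import GRing.Theory.
Local Open Scope ring_scope.

Definition ring_grading (R : pzRingType) (R0 R1 : R -> Prop) : Prop :=
  [/\ R0 0 /\ R1 0,
      (forall x y, R0 x -> R0 y -> R0 (x - y)) /\
      (forall x y, R1 x -> R1 y -> R1 (x - y)),
      (forall x, exists x0 x1, [/\ R0 x0, R1 x1 & x = x0 + x1]),
      (forall x, R0 x -> R1 x -> x = 0) &
      [/\ (forall x y, R0 x -> R0 y -> R0 (x * y)),
          (forall x y, R0 x -> R1 y -> R1 (x * y)),
          (forall x y, R1 x -> R0 y -> R1 (x * y)) &
          (forall x y, R1 x -> R1 y -> R0 (x * y))]].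

Definition superalgebra (F : fieldType) (B : algType F) (B0 B1 : B -> Prop)
  : Prop :=
  ring_grading B0 B1 /\
  (forall (c : F) x, B0 x -> B0 (c *: x)) /\
  (forall (c : F) x, B1 x -> B1 (c *: x)).

(* Center of an associative (super)algebra: associators vanish identically,
   so Z(B) = {x | [a, x] = 0 for all a}. *)
Definition center (R : pzRingType) (x : R) : Prop := forall a : R, a * x = x * a.

Definition even_center (R : pzRingType) (R0 : R -> Prop) (x : R) : Prop :=
  R0 x /\ center x.

(* iota : B -> A presents A as the localization Z^{-1}B at Z \ {0}
   (A contains B via the injective ring morphism iota). *)
Definition is_central_localization (B A : pzRingType) (Z : B -> Prop)
  (iota : {rmorphism B -> A}) : Prop :=
  [/\ injective iota,
      (forall z, Z z -> z != 0 ->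
         exists w : A, w * iota z = 1 /\ iota z * w = 1) &
      (forall a : A, exists z b, [/\ Z z, z != 0 & iota z * a = iota b])].

(* The induced grading on A = Z^{-1}B: A_i = Z^{-1} B_i. *)
Definition loc_part (B A : pzRingType) (Z : B -> Prop)
  (iota : {rmorphism B -> A}) (Bi : B -> Prop) (a : A) : Prop :=
  exists z b, [/\ Z z, z != 0, Bi b & iota z * a = iota b].

Definition loc_field (B A : pzRingType) (Z : B -> Prop)
  (iota : {rmorphism B -> A}) : A -> Prop := loc_part Z iota Z.

Definition ideal (R : pzRingType) (I : R -> Prop) : Prop :=
  [/\ I 0, (forall x y, I x -> I y -> I (x - y)),
      (forall a x, I x -> I (a * x)) & (forall a x, I x -> I (x * a))].

Definition graded_ideal (R : pzRingType) (R0 R1 : R -> Prop) (I : R -> Prop)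
  : Prop :=
  ideal I /\
  (forall x, I x -> exists x0 x1, [/\ R0 x0, R1 x1, I x0, I x1 & x = x0 + x1]).

Definition simple_super (R : pzRingType) (R0 R1 : R -> Prop) : Prop :=
  (exists a b : R, a * b != 0) /\
  (forall I, graded_ideal R0 R1 I ->
     (forall x, I x -> x = 0) \/ (forall x, I x)).

Definition fin_dim_over (R : pzRingType) (k : R -> Prop) : Prop :=
  exists s : seq R, forall a : R, exists cs : seq R,
    [/\ size cs = size s, (forall i, k cs`_i) &
        a = \sum_(i < size s) cs`_i * s`_i].

Definition embeds_in_free_fg (R : pzRingType) (Z : R -> Prop) : Prop :=
  exists (n : nat) (f : R -> 'I_n -> R),
    [/\ (forall x i, Z (f x i)),
        (forall x y i, f (x + y) i = f x i + f y i),
        (forall z x i, Z z -> f (z * x) i = z * f x i) &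
        injective f].

(* Simplicity
   of A = Z^-1 B means that the ideal of B generated by a nonzero homogeneous element
   meets Z \ {0}, and finite dimensionality means that, up to a nonzero denominator
   from Z, every element of B lies in the Z-span of finitely many e_1, ..., e_m.

   First build a nonzero Z-linear map phi : B -> Z.  Start from the identity, whose
   image is spanned (up to denominators) by the e_i.  Composing with a projection onto a
   homogeneous component and a sandwich map x |-> sum p x q makes some value a nonzero
   c in Z.  If the map is not central-valued, compose with a commutator [y, -]: it
   kills c, a nontrivial Z-combination of the spanning vectors, so one spanning vector
   becomes redundant.  After finitely many steps the map is central-valued, and its
   even part is phi.

   Then x |-> (phi (e_i x_q e_j))_(i,j,q), with x_q the homogeneous components of x,
   is Z-linear into Z^(2 m^2) and injective: if all coordinates vanish, phi vanishes on
   the ideal generated by x_q; if x_q != 0 this ideal contains some c in Z \ {0}, and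
   then phi (c y) = c phi y != 0 whenever phi y != 0. *)

From mathcomp Require Import all_boot all_algebra.
From Stdlib Require Import Classical ClassicalEpsilon.
Import GRing.Theory.
Local Open Scope ring_scope.
Set Implicit Arguments. Unset Strict Implicit. Unset Printing Implicit Defensive.


Definition homog (R : pzRingType) (R0 R1 : R -> Prop) (t : bool) : R -> Prop :=
  if t then R1 else R0.

Definition sandwich (R : pzRingType) (l : seq (R * R)) (x : R) : R :=
  \sum_(p <- l) p.1 * x * p.2.

Definition principal_ideal (R : pzRingType) (a y : R) : Prop :=
  exists l : seq (R * R), y = sandwich l a.

Section PrincipalIdeal.
Variable R : pzRingType.

Lemma principal_ideal_self (a : R) : principal_ideal a a.
Proof. by exists [:: (1, 1)]; rewrite /sandwich big_seq1 mul1r mulr1. Qed.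

Lemma principal_idealD (a x y : R) :
  principal_ideal a x -> principal_ideal a y -> principal_ideal a (x + y).
Proof. by move=> [l1 ->] [l2 ->]; exists (l1 ++ l2); rewrite /sandwich big_cat. Qed.

Lemma principal_ideal_ideal (a : R) : ideal (principal_ideal a).
Proof.
split.
- by exists [::]; rewrite /sandwich big_nil.
- move=> x y [l1 ->] [l2 ->]; exists (l1 ++ map (fun p => (- p.1, p.2)) l2).
  rewrite /sandwich big_cat big_map /= -sumrN; congr (_ + _).
  by apply: eq_bigr => p _; rewrite !mulNr.
- move=> b x [l ->]; exists (map (fun p => (b * p.1, p.2)) l).
  by rewrite /sandwich big_map mulr_sumr; apply: eq_bigr => p _; rewrite !mulrA.
- move=> b x [l ->]; exists (map (fun p => (p.1, p.2 * b)) l).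
  by rewrite /sandwich big_map mulr_suml; apply: eq_bigr => p _; rewrite !mulrA.
Qed.

Lemma principal_ideal_min (J : R -> Prop) (a : R) :
  ideal J -> J a -> forall y, principal_ideal a y -> J y.
Proof.
move=> [J0 JB JMl JMr] Ja y [l ->]; apply: big_ind => // [x x' Jx Jx'|p _].
  have -> : x + x' = x - (0 - x') by rewrite sub0r opprK.
  by apply: (JB) => //; apply: JB.
by apply: JMr; apply: JMl.
Qed.

End PrincipalIdeal.

Section Grading.
Variables (R : pzRingType) (R0 R1 : R -> Prop).
Hypothesis gradR : ring_grading R0 R1.

Lemma homog0 t : homog R0 R1 t 0.
Proof. by case: gradR => -[R00 R10] _ _ _ _; case: t. Qed.

Lemma homogB t x y : homog R0 R1 t x -> homog R0 R1 t y -> homog R0 R1 t (x - y).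
Proof. by case: gradR => _ [R0B R1B] _ _ _; rewrite /homog; case: t; auto. Qed.

Lemma homogN t x : homog R0 R1 t x -> homog R0 R1 t (- x).
Proof. by move=> hx; rewrite -sub0r; apply: homogB => //; apply: homog0. Qed.

Lemma homogD t x y : homog R0 R1 t x -> homog R0 R1 t y -> homog R0 R1 t (x + y).
Proof. by move=> hx hy; rewrite -[y]opprK; apply: homogB => //; apply: homogN. Qed.

Lemma homogM t s x y :
  homog R0 R1 t x -> homog R0 R1 s y -> homog R0 R1 (t (+) s) (x * y).
Proof.
by case: gradR => _ _ _ _ [m00 m01 m10 m11]; rewrite /homog; case: t; case: s => /=; auto.
Qed.

Lemma homog_eq0 t x : homog R0 R1 t x -> homog R0 R1 (~~ t) x -> x = 0.
Proof. by case: gradR => _ _ _ hu _; rewrite /homog; case: t => /= hx hx'; apply: hu. Qed.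

Lemma homog_split_uniq t a a' b b' :
  homog R0 R1 t a -> homog R0 R1 t b ->
  homog R0 R1 (~~ t) a' -> homog R0 R1 (~~ t) b' ->
  a + a' = b + b' -> a = b.
Proof.
move=> ha hb ha' hb' e; apply/eqP; rewrite -subr_eq0; apply/eqP.
apply: (homog_eq0 (t := t)); first exact: homogB.
have -> : a - b = b' - a' by rewrite -[a](addrK a') e addrAC [b + b']addrC addrK.
exact: homogB.
Qed.

Lemma even_projection_exists :
  exists p0 : R -> R, forall x, R0 (p0 x) /\ R1 (x - p0 x).
Proof.
apply: (choice (fun x y => R0 y /\ R1 (x - y))) => x; case: gradR => _ _ hdec _ _.
by have [x0 [x1 [h0 h1 ->]]] := hdec x; exists x0; rewrite addrC addKr.
Qed.

Lemma principal_ideal_graded t a :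
  homog R0 R1 t a -> graded_ideal R0 R1 (principal_ideal a).
Proof.
move=> ha; have idI := principal_ideal_ideal a; split=> // _ [l ->].
have [I0 _ _ _] := idI.
pose splits y := exists y0 y1, [/\ R0 y0, R1 y1, principal_ideal a y0,
  principal_ideal a y1 & y = y0 + y1].
have splitsD x y : splits x -> splits y -> splits (x + y).
  move=> [x0 [x1 [hx0 hx1 Ix0 Ix1 ->]]] [y0 [y1 [hy0 hy1 Iy0 Iy1 ->]]].
  exists (x0 + y0), (x1 + y1); split; last exact: addrACA.
  - exact: (homogD (t := false)).
  - exact: (homogD (t := true)).
  - exact: principal_idealD.
  - exact: principal_idealD.
have splits_term s1 s2 q r : homog R0 R1 s1 q -> homog R0 R1 s2 r -> splits (q * a * r).
  move=> hq hr; have hI : principal_ideal a (q * a * r).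
    by exists [:: (q, r)]; rewrite /sandwich big_seq1.
  have := homogM (homogM hq ha) hr; case: (_ (+) _) => h.
  - by exists 0, (q * a * r); rewrite add0r; split=> //; apply: (homog0 false).
  - by exists (q * a * r), 0; rewrite addr0; split=> //; apply: (homog0 true).
rewrite -/(splits _) /sandwich; apply: big_ind => [|//|p _].
  by exists 0, 0; rewrite addr0; split=> //; [apply: (homog0 false) | apply: (homog0 true)].
case: gradR => _ _ hdec _ _.
have [q0 [q1 [hq0 hq1 ->]]] := hdec p.1; have [r0 [r1 [hr0 hr1 ->]]] := hdec p.2.
rewrite !mulrDl !mulrDr.
by apply: (splitsD); apply: (splitsD);
  [apply: (splits_term false false) | apply: (splits_term false true)
  |apply: (splits_term true false) | apply: (splits_term true true)].
Qed.

End Grading.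

Definition Zlinear (R : pzRingType) (Z : R -> Prop) (f : R -> R) : Prop :=
  (forall x y, f (x + y) = f x + f y) /\ (forall z x, Z z -> f (z * x) = z * f x).

Definition Zsubmodule (R : pzRingType) (Z P : R -> Prop) : Prop :=
  [/\ P 0, forall x y, P x -> P y -> P (x - y) & forall z x, Z z -> P x -> P (z * x)].

Definition Zspan (R : pzRingType) (Z : R -> Prop) (u : nat -> R) (r : nat) (y : R) :=
  exists2 zf : nat -> R, (forall i, Z (zf i)) & y = \sum_(i < r) zf i * u i.

Definition frac_span (R : pzRingType) (Z : R -> Prop) (u : nat -> R) (r : nat) (y : R) :=
  exists2 c, Z c /\ c != 0 & Zspan Z u r (c * y).

Definition commutator (R : pzRingType) (y x : R) : R := y * x - x * y.

Section CentralSpans.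
Variables (R : pzRingType) (Z : R -> Prop).
Hypothesis Zcentral : forall z, Z z -> center z.

Lemma Zlinear_comp f g : Zlinear Z f -> Zlinear Z g -> Zlinear Z (fun x => f (g x)).
Proof.
move=> [fD fZ] [gD gZ]; split=> [x y|z x hz]; first by rewrite gD fD.
by rewrite gZ // fZ.
Qed.

Lemma Zlinear0 f : Zlinear Z f -> f 0 = 0.
Proof. by move=> [fD _]; apply: (addrI (f 0)); rewrite -fD !addr0. Qed.

Lemma ZlinearB f x y : Zlinear Z f -> f (x - y) = f x - f y.
Proof. by move=> hf; apply/eqP; rewrite eq_sym subr_eq -hf.1 subrK. Qed.

Lemma Zlinear_sum f (zf : nat -> R) :
  Zlinear Z f -> (forall i, Z (zf i)) -> forall (u : nat -> R) r,
  f (\sum_(i < r) zf i * u i) = \sum_(i < r) zf i * f (u i).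
Proof.
move=> hf hz u r; rewrite (big_morph f hf.1 (Zlinear0 hf)).
by apply: eq_bigr => i _; apply: hf.2.
Qed.

Lemma Zlinear_mull a : Zlinear Z (fun x => a * x).
Proof.
split=> [x y|z x hz]; first exact: mulrDr.
by rewrite mulrA (Zcentral hz) -mulrA.
Qed.

Lemma Zlinear_mulr b : Zlinear Z (fun x => x * b).
Proof. by split=> [x y|z x _]; [exact: mulrDl | exact: esym (mulrA _ _ _)]. Qed.

Lemma Zlinear_sandwich l : Zlinear Z (sandwich l).
Proof.
split=> [x y|z x hz]; rewrite /sandwich.
  by rewrite -big_split; apply: eq_bigr => p _; rewrite mulrDr mulrDl.
by rewrite mulr_sumr; apply: eq_bigr => p _; rewrite !mulrA (Zcentral hz).
Qed.

Lemma Zlinear_commutator y : Zlinear Z (commutator y).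
Proof.
split=> [a b|z x hz]; rewrite /commutator; first by rewrite mulrDr mulrDl opprD addrACA.
by rewrite mulrBr !mulrA (Zcentral hz).
Qed.

Lemma Zspan_map f u r y :
  Zlinear Z f -> Zspan Z u r y -> Zspan Z (fun i => f (u i)) r (f y).
Proof. by move=> hf [zf hz ->]; exists zf => //; exact: (Zlinear_sum hf hz). Qed.

Lemma frac_span_map f u r y :
  Zlinear Z f -> frac_span Z u r y -> frac_span Z (fun i => f (u i)) r (f y).
Proof. by move=> hf [c [hc c0] hs]; exists c => //; rewrite -hf.2 //; apply: Zspan_map. Qed.

Hypothesis Z0 : Z 0.
Hypothesis ZB : forall x y, Z x -> Z y -> Z (x - y).
Hypothesis ZM : forall x y, Z x -> Z y -> Z (x * y).

Lemma Zspan_submodule u r : Zsubmodule Z (Zspan Z u r).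
Proof.
split.
- exists (fun _ => 0) => //; by rewrite big1 // => i _; rewrite mul0r.
- move=> _ _ [z1 h1 ->] [z2 h2 ->]; exists (fun i => z1 i - z2 i) => [i|]; first exact: ZB.
  by rewrite -sumrB; apply: eq_bigr => i _; rewrite mulrBl.
- move=> c _ hc [z h ->]; exists (fun i => c * z i) => [i|]; first exact: ZM.
  by rewrite mulr_sumr; apply: eq_bigr => i _; rewrite mulrA.
Qed.

Lemma Zspan_single u r i h : (i < r)%N -> Z h -> Zspan Z u r (h * u i).
Proof.
move=> ltir hh; exists (fun k => if k == i then h else 0) => [k|]; first by case: ifP.
rewrite (eq_bigr (fun k : 'I_r => if (k : nat) == i then h * u k else 0)); last first.
  by move=> k _; case: ifP => _ //; rewrite mul0r.
by rewrite -big_mkcond (big_ord1_eq _ (fun k => h * u k) i r) ltir.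
Qed.

(* Eliminate [u j] using the relation [\sum_i zf i * u i] killed by [D]. *)
Lemma Zspan_shrink D (u zf : nat -> R) r (j : 'I_r.+1) y :
  Zlinear Z D -> (forall i, Z (zf i)) -> D (\sum_(i < r.+1) zf i * u i) = 0 ->
  Zspan Z u r.+1 y -> Zspan Z (fun i => D (u (bump j i))) r (zf j * D y).
Proof.
move=> hD hzf hv [mu hmu ->].
pose coef i := zf j * mu i - mu j * zf i.
have coefE : \sum_(i < r.+1) coef i * D (u i) = zf j * D (\sum_(i < r.+1) mu i * u i).
  under eq_bigr do rewrite mulrBl -!mulrA.
  by rewrite sumrB -!mulr_sumr -(Zlinear_sum hD hmu) -(Zlinear_sum hD hzf) hv mulr0 subr0.
have coef_j : coef j = 0 by rewrite /coef (Zcentral (hmu j)) subrr.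
rewrite -coefE (bigD1_ord j) //= coef_j mul0r add0r.
by exists (fun i => coef (bump j i)) => // i; apply: ZB; apply: ZM.
Qed.

End CentralSpans.

Definition homog_ideals_meet_center (R : pzRingType) (R0 R1 : R -> Prop) : Prop :=
  forall t a, homog R0 R1 t a -> a != 0 ->
  exists2 c, even_center R0 c /\ c != 0 & principal_ideal a c.

Section EvenCenter.
Variables (B : pzRingType) (B0 B1 : B -> Prop).
Hypothesis gradB : ring_grading B0 B1.
Local Notation Z := (even_center B0).

Lemma even_center_central z : Z z -> center z.
Proof. by case. Qed.

Lemma even_center0 : Z 0.
Proof. by split; [exact: (homog0 gradB false) | move=> a; rewrite mulr0 mul0r]. Qed.

Lemma even_centerB x y : Z x -> Z y -> Z (x - y).
Proof.
move=> [hx cx] [hy cy]; split; first exact: (homogB gradB (t := false)).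
by move=> a; rewrite mulrBr mulrBl cx cy.
Qed.

Lemma even_centerM x y : Z x -> Z y -> Z (x * y).
Proof.
move=> [hx cx] [hy cy]; split; first exact: (homogM gradB (t := false) (s := false)).
by move=> a; rewrite mulrA cx -!mulrA cy.
Qed.

Lemma homog_Zsubmodule t : Zsubmodule Z (homog B0 B1 t).
Proof.
split; [exact: homog0 | exact: homogB |].
by move=> z x [hz _] hx; apply: (homogM gradB (t := false)).
Qed.

Lemma ideal_Zsubmodule P : ideal P -> Zsubmodule Z P.
Proof. by case=> P0 PB PMl _; split=> // z x _; apply: PMl. Qed.

Variable p0 : B -> B.
Hypothesis p0P : forall x, B0 (p0 x) /\ B1 (x - p0 x).

Definition homog_part (q : bool) (x : B) : B := if q then x - p0 x else p0 x.

Lemma homog_part_homog q x : homog B0 B1 q (homog_part q x).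
Proof. by case: q; have [] := p0P x. Qed.

Lemma homog_partE x : homog_part false x + homog_part true x = x.
Proof. exact: subrKC. Qed.

Lemma homog_part_neq0 x : x != 0 -> exists q, homog_part q x != 0.
Proof.
move=> x0; case: (eqVneq (homog_part false x) 0) => [h0|]; last by exists false.
by exists true; apply: contra_neq x0 => h1; rewrite -[x]homog_partE h0 h1 addr0.
Qed.

Lemma p0_eq x a : B0 a -> B1 (x - a) -> p0 x = a.
Proof.
move=> ha hxa; have [h0 h1] := p0P x.
by apply: (homog_split_uniq gradB (t := false) h0 ha h1 hxa); rewrite !subrKC.
Qed.

Lemma p0_id x : B0 x -> p0 x = x.
Proof. by move=> hx; apply: p0_eq; rewrite // subrr; apply: (homog0 gradB true). Qed.

Lemma Zlinear_p0 : Zlinear Z p0.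
Proof.
split=> [x y|z x [hz _]]; apply: p0_eq.
- exact: (homogD gradB (t := false)) (p0P x).1 (p0P y).1.
- rewrite opprD addrACA; apply: (homogD gradB (t := true)).
  + exact: (p0P x).2.
  + exact: (p0P y).2.
- exact: (homogM gradB (t := false) (s := false)) hz (p0P x).1.
- by rewrite -mulrBr; apply: (homogM gradB (t := false) (s := true)) hz (p0P x).2.
Qed.

Lemma Zlinear_homog_part q : Zlinear Z (homog_part q).
Proof.
case: q; last exact: Zlinear_p0.
have [p0D p0Z] := Zlinear_p0.
split=> [x y|z x hz]; rewrite /homog_part; first by rewrite p0D opprD addrACA.
by rewrite p0Z // mulrBr.
Qed.

Lemma p0_center w : center w -> Z (p0 w).
Proof.
move=> cw; split; first exact: (p0P w).1.
have [w0 w1] := p0P w.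
have comm_homog_part t y : homog_part t y * p0 w = p0 w * homog_part t y.
  have hy := homog_part_homog t y.
  apply: (homog_split_uniq gradB (t := t) (a' := homog_part t y * (w - p0 w))
                                          (b' := (w - p0 w) * homog_part t y)).
  - by have := homogM gradB (s := false) hy w0; rewrite addbF.
  - exact: (homogM gradB (t := false) w0 hy).
  - by have := homogM gradB (s := true) hy w1; rewrite addbT.
  - exact: (homogM gradB (t := true) w1 hy).
  by rewrite -mulrDr -mulrDl !subrKC cw.
by move=> y; rewrite -[y]homog_partE mulrDl mulrDr !comm_homog_part.
Qed.

Hypothesis Zreg : forall z b, Z z -> z != 0 -> z * b = 0 -> b = 0.

Lemma even_center_mul_neq0 z b : Z z -> z != 0 -> b != 0 -> z * b != 0.
Proof. by move=> hz z0; apply: contra_neq; apply: Zreg. Qed.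

Lemma frac_span0 u y : frac_span Z u 0 y -> y = 0.
Proof. by move=> [c [hc c0] [zf _]]; rewrite big_ord0; apply: Zreg. Qed.

Hypothesis ideals_meet : homog_ideals_meet_center B0 B1.

Lemma Zlinear_hit_center T u r x0 :
  Zlinear Z T -> (forall x, frac_span Z u r (T x)) -> T x0 != 0 ->
  exists T' u', [/\ Zlinear Z T', forall x, frac_span Z u' r (T' x),
                    Z (T' x0) & T' x0 != 0].
Proof.
move=> hT hTu Tx0; have [q hq] := homog_part_neq0 Tx0.
have [c [hc c0] [l ec]] := ideals_meet (homog_part_homog q (T x0)) hq.
have hS := Zlinear_comp (Zlinear_sandwich even_center_central l) (Zlinear_homog_part q).
exists (fun x => sandwich l (homog_part q (T x))), (fun i => sandwich l (homog_part q (u i))).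
split; [exact: Zlinear_comp hS hT | move=> x; exact: frac_span_map hS (hTu x)
        | by rewrite -ec..].
Qed.

Lemma commutator_shrink T u r x0 y :
  Zlinear Z T -> (forall x, frac_span Z u r.+1 (T x)) -> Z (T x0) -> T x0 != 0 ->
  exists u', forall x, frac_span Z u' r (commutator y (T x)).
Proof.
move=> hT hTu hZx0 Tx0; have [c1 [hc1 c10] [zf hzf ezf]] := hTu x0.
have [j hj] : exists j : 'I_r.+1, zf j != 0.
  apply/existsP; apply: contraT; rewrite negb_exists => /forallP zf0.
  move: (even_center_mul_neq0 hc1 c10 Tx0); rewrite ezf big1 ?eqxx // => i _.
  by move: (zf0 i); rewrite negbK => /eqP ->; rewrite mul0r.
have hD := Zlinear_commutator even_center_central y.
have hv : commutator y (\sum_(i < r.+1) zf i * u i) = 0.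
  by rewrite -ezf /commutator (even_center_central (even_centerM hc1 hZx0)) subrr.
exists (fun i => commutator y (u (bump j i))) => x.
have [c2 [hc2 c20] hs] := hTu x.
exists (zf j * c2); first by split; [exact: even_centerM | exact: even_center_mul_neq0].
rewrite -mulrA -hD.2 //.
exact: (Zspan_shrink even_center_central even_centerB even_centerM j hD hzf hv hs).
Qed.

Lemma exists_central_Zlinear r T u :
  Zlinear Z T -> (forall x, frac_span Z u r (T x)) -> (exists x, T x != 0) ->
  exists2 T', Zlinear Z T' /\ (forall x, center (T' x))
            & exists x, Z (T' x) /\ T' x != 0.
Proof.
elim: r T u => [|r IH] T u hT hTu [x0 Tx0].
  by move: Tx0; rewrite (frac_span0 (hTu x0)) eqxx.
have [T2 [u2 [hT2 hT2u hZ T2x0]]] := Zlinear_hit_center hT hTu Tx0.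
have [cT2|] := classic (forall x, center (T2 x)); first by exists T2 => //; exists x0.
move=> /not_all_ex_not [x1 /not_all_ex_not [y hy]].
have [u' hu'] := commutator_shrink y hT2 hT2u hZ T2x0.
apply: IH (Zlinear_comp (Zlinear_commutator even_center_central y) hT2) hu' _.
by exists x1; apply/eqP => /eqP; rewrite subr_eq0 => /eqP.
Qed.

Lemma exists_Z_functional e m :
  (forall x, frac_span Z e m x) -> (exists x : B, x != 0) ->
  exists2 phi, Zlinear Z phi /\ (forall x, Z (phi x)) & exists x, phi x != 0.
Proof.
move=> e_spans nzB; have hid : Zlinear Z id by [].
have [T [hT cT] [x [hZx Tx0]]] := exists_central_Zlinear hid e_spans nzB.
exists (fun x => p0 (T x)).
  by split=> [|y]; [exact: Zlinear_comp Zlinear_p0 hT | exact: p0_center].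
by exists x; rewrite p0_id //; case: hZx.
Qed.

Lemma functional_annihilates_ideal_eq0 phi t d :
  Zlinear Z phi -> (exists x, phi x != 0) -> homog B0 B1 t d ->
  (forall b b', phi (b * (d * b')) = 0) -> d = 0.
Proof.
move=> hphi [x phix] hd phi_d; have [//|d0] := eqVneq d 0.
have [c [hc c0] [l ec]] := ideals_meet hd d0.
suff phix0 : phi x = 0 by rewrite phix0 eqxx in phix.
apply: (Zreg hc c0); rewrite -hphi.2 // ec /sandwich mulr_suml.
rewrite (big_morph phi hphi.1 (Zlinear0 hphi)) big1 // => p _.
by rewrite -!mulrA phi_d.
Qed.

Variables (e : nat -> B) (m : nat).
Hypothesis e_spans : forall x, frac_span Z e m x.

Lemma Zlinear_vanish G :
  Zlinear Z G -> (forall i, (i < m)%N -> G (e i) = 0) -> forall b, G b = 0.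
Proof.
move=> hG Ge0 b; have [c [hc c0] [zf hz ez]] := e_spans b.
apply: (Zreg hc c0); rewrite -hG.2 // ez (Zlinear_sum hG hz) big1 // => i _.
by rewrite Ge0 ?mulr0.
Qed.

Lemma embeds_in_free_fg_of_frac_span :
  (exists x : B, x != 0) -> embeds_in_free_fg Z.
Proof.
move=> nzB; have [phi [hphi phiZ] nz_phi] := exists_Z_functional e_spans nzB.
have Zc := even_center_central.
pose F (k : 'I_m * 'I_m * bool) x := phi (e k.1.1 * (homog_part k.2 x * e k.1.2)).
have hF k : Zlinear Z (F k).
  apply: Zlinear_comp hphi (Zlinear_comp (Zlinear_mull Zc _) _).
  exact: Zlinear_comp (Zlinear_mulr _ _) (Zlinear_homog_part _).
have F_inj d : (forall k, F k d = 0) -> d = 0.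
  move=> Fd0; suff hq q : homog_part q d = 0 by rewrite -[d]homog_partE !hq addr0.
  apply: (functional_annihilates_ideal_eq0 hphi nz_phi (homog_part_homog q d)) => b b'.
  have phi_e i : (i < m)%N -> forall b', phi (e i * (homog_part q d * b')) = 0.
    move=> ltim; apply: Zlinear_vanish => [|j ltjm].
      exact: Zlinear_comp hphi (Zlinear_comp (Zlinear_mull Zc _) (Zlinear_mull Zc _)).
    exact: (Fd0 (Ordinal ltim, Ordinal ltjm, q)).
  move: b; apply: Zlinear_vanish => [|i ltim]; last exact: phi_e.
  exact: Zlinear_comp hphi (Zlinear_mulr _ _).
exists #|{: 'I_m * 'I_m * bool}|, (fun x k => F (enum_val k) x); split.
- by move=> x k; apply: phiZ.
- by move=> x y k; apply: (hF _).1.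
- by move=> z x k hz; apply: (hF _).2.
move=> x y Fxy; apply/eqP; rewrite -subr_eq0; apply/eqP; apply: F_inj => k.
have := congr1 (fun f => f (enum_rank k)) Fxy; rewrite /= enum_rankK => Fkxy.
by rewrite (ZlinearB _ _ (hF k)) Fkxy subrr.
Qed.

End EvenCenter.

Section Localization.
Variables (B A : pzRingType) (B0 B1 : B -> Prop) (iota : {rmorphism B -> A}).
Hypothesis gradB : ring_grading B0 B1.
Local Notation Z := (even_center B0).
Local Notation loc := (loc_part Z iota).
Hypothesis Zreg : forall z b, Z z -> z != 0 -> z * b = 0 -> b = 0.
Hypothesis locA : is_central_localization Z iota.

Lemma exists_nonzero_even_center : exists2 z, Z z & z != 0.
Proof. by have [_ _ hrep] := locA; have [z [_ [hz z0 _]]] := hrep 0; exists z. Qed.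

Lemma iota_center z : Z z -> center (iota z).
Proof.
move=> [_ cz] a; have [_ hinv hrep] := locA.
have [w [b [hw w0 ewa]]] := hrep a.
have [v [vw wv]] := hinv w hw w0.
have ea : a = v * iota b by rewrite -ewa mulrA vw mul1r.
have cv : v * iota z = iota z * v.
  rewrite -[LHS]mulr1 -wv mulrA -[v * _ * _]mulrA -rmorphM -cz rmorphM.
  by rewrite mulrA vw mul1r.
by rewrite ea -mulrA -rmorphM cz rmorphM !mulrA cv.
Qed.

Lemma loc_part0 P : P 0 -> loc P 0.
Proof.
move=> P0; have [z hz z0] := exists_nonzero_even_center.
by exists z, 0; rewrite mulr0 rmorph0.
Qed.

Lemma loc_part_iota P b : Zsubmodule Z P -> P b -> loc P (iota b).
Proof.
move=> [_ _ PZ] Pb; have [z hz z0] := exists_nonzero_even_center.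
by exists z, (z * b); split=> //; [exact: PZ | rewrite rmorphM].
Qed.

Lemma loc_part_all a : loc (fun _ => True) a.
Proof. by have [_ _ hrep] := locA; have [z [b [hz z0 e]]] := hrep a; exists z, b. Qed.

Lemma loc_partB P x y : Zsubmodule Z P -> loc P x -> loc P y -> loc P (x - y).
Proof.
move=> [_ PB PZ] [z1 [b1 [hz1 z10 hb1 e1]]] [z2 [b2 [hz2 z20 hb2 e2]]].
exists (z1 * z2), (z2 * b1 - z1 * b2); split.
- exact: (even_centerM gradB).
- exact: (even_center_mul_neq0 Zreg).
- by apply: PB; apply: PZ.
rewrite mulrBr rmorphB !rmorphM -e1 -e2 !mulrA.
by rewrite (iota_center hz1 (iota z2)).
Qed.

Lemma loc_partD P x y : Zsubmodule Z P -> loc P x -> loc P y -> loc P (x + y).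
Proof.
move=> hP hx hy; have [P0 _ _] := hP.
have -> : x + y = x - (0 - y) by rewrite sub0r opprK.
by apply: loc_partB hP hx (loc_partB hP (loc_part0 P0) hy).
Qed.

Lemma loc_partM (P Q S : B -> Prop) x y :
  (forall b b', P b -> Q b' -> S (b * b')) -> loc P x -> loc Q y -> loc S (x * y).
Proof.
move=> PQS [z1 [b1 [hz1 z10 hb1 e1]]] [z2 [b2 [hz2 z20 hb2 e2]]].
exists (z1 * z2), (b1 * b2); split.
- exact: (even_centerM gradB).
- exact: (even_center_mul_neq0 Zreg).
- exact: PQS.
rewrite !rmorphM -e1 -e2 -!mulrA; congr (_ * _).
by rewrite !mulrA (iota_center hz2 x).
Qed.

Lemma loc_part_ideal P : ideal P -> ideal (loc P).
Proof.
move=> Pideal; have subP := ideal_Zsubmodule B0 Pideal; have [P0 _ PMl PMr] := Pideal.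
split=> [|x y|a x|a x]; first exact: loc_part0.
- exact: loc_partB subP.
- exact: loc_partM (fun b b' _ => PMl b b') (loc_part_all a).
- by move=> hx; apply: loc_partM (fun b b' hb _ => PMr b' b hb) hx (loc_part_all a).
Qed.

Lemma loc_grading : ring_grading (loc B0) (loc B1).
Proof.
have [hinj hinv hrep] := locA.
have hsub := homog_Zsubmodule gradB.
split.
- by split; apply: loc_part0; [exact: (homog0 gradB false) | exact: (homog0 gradB true)].
- by split=> x y; [exact: (loc_partB (hsub false)) | exact: (loc_partB (hsub true))].
- move=> a; have [w [b [hw w0 ewa]]] := hrep a.
  have [v [vw wv]] := hinv w hw w0.
  have [_ _ hdec _ _] := gradB; have [b0 [b1 [hb0 hb1 eb]]] := hdec b.
  exists (v * iota b0), (a - v * iota b0); split; last by rewrite subrKC.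
    by exists w, b0; split=> //; rewrite mulrA wv mul1r.
  exists w, b1; split=> //.
  by rewrite mulrBr ewa mulrA wv mul1r -rmorphB eb addrC addKr.
- move=> x [z0 [b0 [hz0 z00 hb0 e0]]] [z1 [b1 [hz1 z10 hb1 e1]]].
  have eb : z1 * b0 = z0 * b1.
    by apply: hinj; rewrite !rmorphM -e0 -e1 !mulrA (iota_center hz0 (iota z1)).
  have b00 : b0 = 0.
    apply: (Zreg hz1 z10); apply: (homog_eq0 gradB (t := false)).
      exact: (homogM gradB (t := false) (s := false)) hz1.1 hb0.
    by rewrite eb; exact: (homogM gradB (t := false) (s := true)) hz0.1 hb1.
  have [v [vz _]] := hinv z0 hz0 z00.
  by rewrite -[x]mul1r -vz -mulrA e0 b00 rmorph0 mulr0.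
have [_ _ _ _ [m00 m01 m10 m11]] := gradB.
by split=> x y; apply: loc_partM.
Qed.

Lemma iota_homog t b : homog B0 B1 t b -> homog (loc B0) (loc B1) t (iota b).
Proof. by case: t => hb; apply: loc_part_iota (homog_Zsubmodule gradB _) hb. Qed.

Lemma ideals_meet_of_simple :
  simple_super (loc B0) (loc B1) -> homog_ideals_meet_center B0 B1.
Proof.
move=> [_ simpleA] t a ha a0; have [hinj _ _] := locA.
have graded := principal_ideal_graded loc_grading (iota_homog ha).
have [Ia0|Iall] := simpleA _ graded.
  have /hinj a_eq0 : iota a = iota 0.
    by rewrite rmorph0; apply: Ia0; apply: principal_ideal_self.
  by rewrite a_eq0 eqxx in a0.
have Iideal := principal_ideal_ideal a.
have loc_ideal := loc_part_ideal Iideal.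
have Ia := loc_part_iota (ideal_Zsubmodule B0 Iideal) (principal_ideal_self a).
have [c [b [hc c0 hb ecb]]] := principal_ideal_min loc_ideal Ia (Iall 1).
by exists c => //; rewrite (hinj c b) // -ecb mulr1.
Qed.

Lemma frac_span_of_fin_dim :
  fin_dim_over (loc_field Z iota) -> exists e m, forall x, frac_span Z e m x.
Proof.
move=> [s hs]; have [hinj _ _] := locA.
have [g hg] : exists g : nat -> B, forall i, loc (eq (g i)) s`_i.
  apply: (choice (fun i g => loc (eq g) s`_i)) => i.
  by have [z [b [hz z0 _ e]]] := loc_part_all s`_i; exists b, z, b.
have hspan := Zspan_submodule (even_center0 gradB) (even_centerB gradB)
  (even_centerM gradB) g (size s).
exists g, (size s) => x.
suff [c [b [hc c0 hb ecx]]] : loc (Zspan Z g (size s)) (iota x).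
  by exists c => //; rewrite (hinj (c * x) b) // rmorphM.
have [cs [_ hcs ->]] := hs (iota x).
apply: big_ind => [|y y'|i _]; [by apply: loc_part0; case: hspan | exact: loc_partD hspan |].
apply: loc_partM (hcs i) (hg i) => z _ hz <-.
exact: (Zspan_single (even_center0 gradB)).
Qed.

End Localization.

Theorem theorem1 (F : fieldType) (B : algType F) (B0 B1 : B -> Prop)
  (A : pzRingType) (iota : {rmorphism B -> A}) :
  superalgebra B0 B1 ->
  (forall z : B, even_center B0 z -> z != 0 ->
     forall b : B, (z * b = 0 \/ b * z = 0) -> b = 0) ->
  is_central_localization (even_center B0) iota ->
  simple_super (loc_part (even_center B0) iota B0)
               (loc_part (even_center B0) iota B1) ->
  fin_dim_over (loc_field (even_center B0) iota) ->
  embeds_in_free_fg (even_center B0).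
Proof.
move=> [gradB _] Zreg locA simpleA findimA.
have Zreg' z b : even_center B0 z -> z != 0 -> z * b = 0 -> b = 0.
  by move=> hz z0 zb0; apply: (Zreg z hz z0 b); left.
have [p0 p0P] := even_projection_exists gradB.
have [e [m e_spans]] := frac_span_of_fin_dim gradB Zreg' locA findimA.
have [z _ z0] := exists_nonzero_even_center locA.
exact: (embeds_in_free_fg_of_frac_span gradB p0P Zreg'
         (ideals_meet_of_simple gradB Zreg' locA simpleA) e_spans (ex_intro _ z z0)).
Qed.
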